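(* Let $(l,k,b)$ be a suspension triplet for $(X_A,\sigma_A)$ and $c=l-k$. Then there is a bijective correspondence $\tau\mapsto\gamma_\tau$ between the primitive periodic orbits $\tau\in P_{orb}(S^{l,k}_{A,b},\phi_A)$ of the one-sided suspension and the periodic orbits $\gamma_\tau\in P_{orb}(X_A)$ of $(X_A,\sigma_A)$ such that $\ell(\tau)=\beta_{\gamma_\tau}(c)$, where for $\gamma=\{x,\sigma_A(x),\dots,\sigma_A^{p-1}(x)\}$ with $p$ the least period of $x$, $\beta_\gamma(c)=\sum_{i=0}^{p-1}c(\sigma_A^i(x))$.
   Context: Let $N>1$ and $A$ an irreducible $N\times N$ $\{0,1\}$-matrix which is not a permutation matrix. $X_A$ is the compact space of sequences $(x_n)_{n\in\mathbb N}$, $x_n\in\{1,\dots,N\}$, $A(x_n,x_{n+1})=1$, with $\sigma_A((x_n)_n)=(x_{n+1})_n$. $\mathbb Z_+$, $\mathbb R_+$ are nonnegative integers/reals. A periodic orbit of $(X_A,\sigma_A)$ is a set $\{x,\sigma_A(x),\dots,\sigma_A^{p-1}(x)\}$ where $\sigma_A^p(x)=x$ and $p\ge1$ is minimal; $P_{orb}(X_A)$ is the set of these. $H^A$ is the quotient of $C(X_A,\mathbb Z)$ by $\{u-u\circ\sigma_A\}$, $H^A_+$ the classes of $\mathbb Z_+$-valued continuous functions; $[f]\in H^A_+$ is an order unit if for every $[u]\in H^A$ some $n\in\mathbb N$ has $n[f]-[u]\in H^A_+$. A suspension triplet is $(l,k,b)$ with $l,k\in C(X_A,\mathbb R_+)$,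 $b\in C(X_A,\mathbb R)$ such that $c=l-k$ is integer-valued with $[c]$ an order unit, and $l-b$, $k-b\circ\sigma_A$ take values in $\mathbb Z_+$. $S^{l,k}_{A,b}$ is the quotient of $\{(x,r)\in X_A\times\mathbb R: r\ge b(x)\}$ by the equivalence relation generated by $(x,r)\sim(\sigma_A(x),r-c(x))$ whenever $r\ge l(x)$, with classes $[x,r]$ and flow $\phi_{A,t}([x,r])=[x,r+t]$, $t\in\mathbb R_+$. A (primitive) periodic orbit of this flow is a set $\tau=\{\phi_{A,t}(u):t\in\mathbb R_+\}$ for a point $u$ with $\phi_{A,T}(u)=u$ for some $T>0$; $P_{orb}(S^{l,k}_{A,b},\phi_A)$ is the set of these, and $\ell(\tau)=\min\{t>0:\phi_{A,t}(u)=u\}$ for any $u\in\tau$. *)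

From HB Require Import structures.
From mathcomp Require Import all_boot all_order all_algebra.
From mathcomp Require Import boolp classical_sets reals.
From Stdlib Require Import Relation_Operators.
Set Implicit Arguments. Unset Strict Implicit. Unset Printing Implicit Defensive.
Import Order.TTheory GRing.Theory Num.Theory.
Local Open Scope ring_scope.
Local Open Scope classical_set_scope.

Definition irreducible_mx (N : nat) (A : 'M[int]_N) : Prop :=
  forall i j : 'I_N, exists n : nat, 0 < (A ^+ n) i j.

Definition zero_one_mx (N : nat) (A : 'M[int]_N) : Prop :=
  forall i j, A i j = 0 \/ A i j = 1.

Definition XA (N : nat) (A : 'M[int]_N) : Type :=
  {x : nat -> 'I_N | forall n, A (x n) (x n.+1) = 1}.

Lemma shift_ok (N : nat) (A : 'M[int]_N) (x : XA A) :
  forall n, A (proj1_sig x n.+1) (proj1_sig x n.+2) = 1.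
Proof. by move=> n; case: x => f Hf /=; apply: Hf. Qed.

Definition sigmaA (N : nat) (A : 'M[int]_N) (x : XA A) : XA A :=
  exist _ (fun n => proj1_sig x n.+1) (@shift_ok N A x).

(* x and y agree on the first n coordinates (cylinder neighbourhoods,
   a base of the product topology of X_A) *)
Definition agree (N : nat) (A : 'M[int]_N) (n : nat) (x y : XA A) : Prop :=
  forall i, (i < n)%N -> proj1_sig x i = proj1_sig y i.

Definition contR (R : realType) (N : nat) (A : 'M[int]_N) (f : XA A -> R) : Prop :=
  forall (x : XA A) (e : R), 0 < e ->
    exists n, forall y, agree n x y -> `|f x - f y| < e.

Definition contZ (N : nat) (A : 'M[int]_N) (f : XA A -> int) : Prop :=
  forall x : XA A, exists n, forall y, agree n x y -> f y = f x.

Definition coboundary (N : nat) (A : 'M[int]_N) (w : XA A -> int) : Prop :=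
  exists u : XA A -> int, contZ u /\ forall x, w x = u x - u (sigmaA x).

(* [w] in H^A_+ : w is cohomologous to a Z_+-valued continuous function *)
Definition inHplus (N : nat) (A : 'M[int]_N) (w : XA A -> int) : Prop :=
  exists g : XA A -> int, contZ g /\ (forall x, 0 <= g x) /\
    coboundary (fun x => w x - g x).

Definition order_unit (N : nat) (A : 'M[int]_N) (f : XA A -> int) : Prop :=
  forall u : XA A -> int, contZ u ->
    exists n : nat, inHplus (fun x => f x *+ n - u x).

Definition suspension_triplet (R : realType) (N : nat) (A : 'M[int]_N)
    (l k b : XA A -> R) : Prop :=
  [/\ contR l /\ contR k /\ contR b,
      (forall x, 0 <= l x) /\ (forall x, 0 <= k x),
      (exists cz : XA A -> int, contZ cz /\ order_unit cz /\
          forall x, l x - k x = (cz x)%:~R),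
      (forall x, exists m : nat, l x - b x = m%:R)
    & (forall x, exists m : nat, k x - b (sigmaA x) = m%:R)].

Definition least_period (N : nat) (A : 'M[int]_N) (x : XA A) (p : nat) : Prop :=
  [/\ (0 < p)%N, iter p (@sigmaA N A) x = x &
      forall q, (0 < q)%N -> (q < p)%N -> iter q (@sigmaA N A) x <> x].

Definition orbit_set (N : nat) (A : 'M[int]_N) (x : XA A) (p : nat) : set (XA A) :=
  [set y | exists2 i, (i < p)%N & y = iter i (@sigmaA N A) x].

Definition is_porb (N : nat) (A : 'M[int]_N) (g : set (XA A)) : Prop :=
  exists x p, least_period x p /\ g = orbit_set x p.

Definition beta (R : realType) (N : nat) (A : 'M[int]_N) (c : XA A -> R)
    (x : XA A) (p : nat) : R :=
  \sum_(i < p) c (iter i (@sigmaA N A) x).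

Definition sdom (R : realType) (N : nat) (A : 'M[int]_N) (b : XA A -> R)
    (p : XA A * R) : Prop := b p.1 <= p.2.

Definition sstep (R : realType) (N : nat) (A : 'M[int]_N) (l k b : XA A -> R)
    (p q : XA A * R) : Prop :=
  [/\ sdom b p, l p.1 <= p.2 & q = (sigmaA p.1, p.2 - (l p.1 - k p.1))].

Definition sequiv (R : realType) (N : nat) (A : 'M[int]_N) (l k b : XA A -> R) :
    XA A * R -> XA A * R -> Prop :=
  clos_refl_sym_trans _ (sstep l k b).

Definition sclass (R : realType) (N : nat) (A : 'M[int]_N) (l k b : XA A -> R)
    (p : XA A * R) : set (XA A * R) :=
  [set q | sequiv l k b p q].

(* the forward flow orbit {phi_t([x,r]) : t >= 0} = {[x,r+t] : t >= 0} *)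
Definition sorbit (R : realType) (N : nat) (A : 'M[int]_N) (l k b : XA A -> R)
    (x : XA A) (r : R) : set (set (XA A * R)) :=
  [set C | exists2 t, 0 <= t & C = sclass l k b (x, r + t)].

Definition is_sporb (R : realType) (N : nat) (A : 'M[int]_N) (l k b : XA A -> R)
    (tau : set (set (XA A * R))) : Prop :=
  exists x r T, [/\ sdom b (x, r), 0 < T,
     sclass l k b (x, r + T) = sclass l k b (x, r) & tau = sorbit l k b x r].

Definition is_min_speriod (R : realType) (N : nat) (A : 'M[int]_N)
    (l k b : XA A -> R) (x : XA A) (r t : R) : Prop :=
  [/\ 0 < t, sclass l k b (x, r + t) = sclass l k b (x, r) &
      forall s, 0 < s -> sclass l k b (x, r + s) = sclass l k b (x, r) -> t <= s].

From HB Require Import structures.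
From mathcomp Require Import all_boot all_order all_algebra.
From mathcomp Require Import boolp classical_sets reals.
From Stdlib Require Import Relation_Operators.
From mathcomp Require Import lra.
Import Order.TTheory GRing.Theory Num.Theory.
Set Implicit Arguments. Unset Strict Implicit. Unset Printing Implicit Defensive.
Local Open Scope ring_scope.
Local Open Scope classical_set_scope.

(* Write c = l - k and S_n for Birkhoff sums of c.  Two points (x,r) and (y,s)
   are identified in the suspension exactly when they have a common image under
   the partial map (x,r) |-> (sigma x, r - c x), defined when r >= l x (here
   b <= l is used).  Since [c] is an order unit, S_p(z) > 0 whenever
   sigma^p z = z.  So if the class of (x,r) returns after time T > 0, some
   forward iterate of x is periodic and T is a positive multiple of its
   Birkhoff sum; conversely that sum is a return time once r is large, and
   return times are the same at every point of a flow orbit.  The bijection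
   sends tau to the periodic points z having some class [z,s] in tau. *)

Section Iterates.
Variables (X : Type) (f : X -> X).

Lemma iterC m n x : iter m f (iter n f x) = iter n f (iter m f x).
Proof. by rewrite -!iterD addnC. Qed.

Lemma iter_periodic p n x : iter p f x = x -> iter p f (iter n f x) = iter n f x.
Proof. by move=> px; rewrite iterC px. Qed.

Lemma iter_periodic_mul p q x : iter p f x = x -> iter (q * p) f x = x.
Proof. by move=> px; elim: q => [//|q IHq]; rewrite mulSn iterD IHq px. Qed.

Lemma iter_periodic_mod p n x : iter p f x = x -> iter n f x = iter (n %% p) f x.
Proof. by move=> px; rewrite {1}(divn_eq n p) addnC iterD iter_periodic_mul. Qed.

Lemma iter_periodicK p n x : (0 < p)%N -> iter p f x = x ->
  iter (p * n - n) f (iter n f x) = x.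
Proof.
move=> p_gt0 px; rewrite -iterD subnK ?leq_pmull //.
by rewrite mulnC iter_periodic_mul.
Qed.

Lemma iter_eq_trans a a' e e' x y z :
  iter a f x = iter a' f y -> iter e f z = iter e' f y ->
  exists m n, iter m f x = iter n f z.
Proof.
move=> exy ezy; case: (leqP a' e') => a'e'.
- by exists (e' - a' + a)%N, e; rewrite iterD exy -iterD subnK.
- by exists a, (a' - e' + e)%N; rewrite iterD ezy -iterD subnK // ltnW.
Qed.

End Iterates.

Section Birkhoff.
Variables (V : zmodType) (X : Type) (f : X -> X) (c : X -> V).

Definition birkhoff n x : V := \sum_(j < n) c (iter j f x).

Lemma birkhoff0 x : birkhoff 0 x = 0.
Proof. by rewrite /birkhoff big_ord0. Qed.

Lemma birkhoffS n x : birkhoff n.+1 x = birkhoff n x + c (iter n f x).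
Proof. by rewrite /birkhoff big_ord_recr. Qed.

Lemma birkhoffD m n x : birkhoff (m + n) x = birkhoff m x + birkhoff n (iter m f x).
Proof.
rewrite /birkhoff big_split_ord; congr (_ + _).
by apply: eq_bigr => i _; rewrite /= addnC iterD.
Qed.

Lemma birkhoff_periodic p n x : iter p f x = x ->
  birkhoff p (iter n f x) = birkhoff p x.
Proof.
move=> px; elim: n => [//|n IHn]; rewrite -IHn iterS.
have := birkhoffD 1 p (iter n f x); rewrite addnC birkhoffD iter_periodic //.
rewrite [birkhoff 1 _]/birkhoff big_ord1 /= => E.
by apply: (addrI (c (iter n f x))); rewrite -E addrC.
Qed.

Lemma birkhoff_periodic_mul p q x : iter p f x = x ->
  birkhoff (q * p) x = birkhoff p x *+ q.
Proof.
move=> px; elim: q => [|q IHq]; first by rewrite birkhoff0.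
by rewrite mulSn birkhoffD px IHq mulrS.
Qed.

Lemma birkhoff_coboundary (u : X -> V) n x :
  (forall y, c y = u y - u (f y)) -> iter n f x = x -> birkhoff n x = 0.
Proof.
move=> cu xn; rewrite /birkhoff -(big_mkord xpredT (fun j => c (iter j f x))).
rewrite (telescope_sumr_eq (fun j => - u (iter j f x))) // ?xn ?subrr //.
by move=> j _; rewrite cu iterS opprK addrC.
Qed.

End Birkhoff.

Section Descent.
Variables (R : realType) (X : Type) (f : X -> X) (c l : X -> R).
Local Notation S := (birkhoff f c).

Definition descend (p : X * R) : X * R := (f p.1, p.2 - c p.1).

Definition can_descend n (p : X * R) : Prop :=
  forall j, (j < n)%N -> l (iter j descend p).1 <= (iter j descend p).2.

Definition descends (p q : X * R) : Prop :=
  exists2 n, can_descend n p & iter n descend p = q.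

Definition joinable (p q : X * R) : Prop :=
  exists2 w, descends p w & descends q w.

Definition return_time x r T : Prop := joinable (x, r) (x, r + T).

Lemma iter_descend n x r : iter n descend (x, r) = (iter n f x, r - S n x).
Proof.
elim: n => [|n IHn]; first by rewrite /= birkhoff0 subr0.
by rewrite iterS IHn /descend /= birkhoffS opprD addrA.
Qed.

Lemma can_descendS n p : can_descend n.+1 p <-> l p.1 <= p.2 /\ can_descend n (descend p).
Proof.
split=> [H|[lp H] [//|j] lt_jn]; last by rewrite iterSr; apply: H.
by split=> [|j lt_jn]; [apply: (H 0%N) | rewrite -iterSr; apply: H].
Qed.

Lemma can_descendD m n p :
  can_descend (m + n) p <-> can_descend m p /\ can_descend n (iter m descend p).
Proof.
elim: m p => [|m IHm] p; first by split=> [H|[]//]; split=> // j.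
by rewrite addSn !can_descendS IHm iterSr; split=> [[? []]|[[? ?] ?]].
Qed.

Lemma can_descend_le n x r r' : r <= r' -> can_descend n (x, r) -> can_descend n (x, r').
Proof. by move=> rr' H j /H; rewrite !iter_descend /=; lra. Qed.

Lemma can_descend_high n x : exists r0, forall r, r0 <= r -> can_descend n (x, r).
Proof.
elim: n => [|n [r0 IHn]]; first by exists 0 => r _ j.
exists (Num.max r0 (l (iter n f x) + S n x)) => r; rewrite ge_max => /andP [r0r lr] j.
rewrite ltnS leq_eqVlt => /orP [/eqP ->|lt_jn]; last exact: IHn.
by rewrite iter_descend /=; lra.
Qed.

Lemma descends_refl p : descends p p.
Proof. by exists 0%N. Qed.

Lemma descends_trans p q s : descends p q -> descends q s -> descends p s.
Proof.
move=> [n Hn <-] [m Hm <-]; exists (n + m)%N; first exact/can_descendD.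
by rewrite addnC iterD.
Qed.

Lemma descends_total p q s : descends p q -> descends p s -> descends q s \/ descends s q.
Proof.
move=> [n Hn <-] [m Hm <-].
wlog le_nm : n m Hn Hm / (n <= m)%N => [wlog|].
  by case: (leqP n m) => [|/ltnW] /wlog; [apply | move=> /(_ Hm Hn) /or_comm].
left; exists (m - n)%N; last by rewrite -iterD subnK.
by move: Hm; rewrite -{1}(subnKC le_nm) => /can_descendD [].
Qed.

Lemma joinable_refl p : joinable p p.
Proof. by exists p; apply: descends_refl. Qed.

Lemma joinable_sym p q : joinable p q -> joinable q p.
Proof. by case=> w; exists w. Qed.

Lemma joinable_trans p q s : joinable p q -> joinable q s -> joinable p s.
Proof.
move=> [w1 pw1 qw1] [w2 qw2 sw2].
case: (descends_total qw1 qw2) => [w12|w21].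
- by exists w2 => //; apply: descends_trans w12.
- by exists w1 => //; apply: descends_trans w21.
Qed.

Lemma descends_joinable p q : descends p q -> joinable p q.
Proof. by exists q => //; apply: descends_refl. Qed.

Lemma descends_shift x r y s u : 0 <= u ->
  descends (x, r) (y, s) -> descends (x, r + u) (y, s + u).
Proof.
move=> u_ge0 [n Hn E]; exists n; first by apply: can_descend_le Hn; lra.
by move: E; rewrite !iter_descend => -[-> <-]; congr pair; lra.
Qed.

Lemma joinable_shift x r y s u : 0 <= u ->
  joinable (x, r) (y, s) -> joinable (x, r + u) (y, s + u).
Proof. by move=> u_ge0 [[z t] xz yz]; exists (z, t + u); apply: descends_shift. Qed.

Lemma joinable_iter x r y s : joinable (x, r) (y, s) -> exists m n, iter m f x = iter n f y.
Proof.
move=> [[z t] [m _ Em] [n _ En]]; exists m, n.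
by move: Em En; rewrite !iter_descend => -[-> _] [-> _].
Qed.

Lemma return_time_shift u x r T : 0 <= u -> return_time x r T -> return_time x (r + u) T.
Proof. by move=> u_ge0 /(joinable_shift u_ge0); rewrite /return_time addrAC. Qed.

Lemma return_time_add x r T1 T2 :
  return_time x r T1 -> return_time x (r + T1) T2 -> return_time x r (T1 + T2).
Proof. by rewrite /return_time addrA; apply: joinable_trans. Qed.

Lemma return_time_mul x r T j : 0 <= T -> return_time x r T -> return_time x r (T *+ j).
Proof.
move=> T_ge0 rT; elim: j => [|j IHj]; first by rewrite /return_time addr0; apply: joinable_refl.
by rewrite mulrSr; apply: return_time_add IHj (return_time_shift (mulrn_wge0 j T_ge0) rT).
Qed.

Lemma exists_mulrn_ge (T t : R) : 0 < T -> 0 <= t -> exists j, t <= T *+ j.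
Proof.
move=> T_gt0 t_ge0; have tT_ge0 : 0 <= t / T by rewrite divr_ge0 // ltW.
exists (Num.Def.archi_bound (t / T)); rewrite -mulr_natl.
by have := archi_boundP tT_ge0; rewrite ltr_pdivrMr // mulrC => /ltW.
Qed.

(* Forwards: (x, r) is joinable to (x, r + T *+ j) with T *+ j >= t, above which T' applies. *)
Lemma return_time_tail x r T t T' : 0 < T -> return_time x r T -> 0 <= t -> 0 <= T' ->
  return_time x (r + t) T' <-> return_time x r T'.
Proof.
move=> T_gt0 rT t_ge0 T'_ge0; split; last exact: return_time_shift.
have [j tTj] := exists_mulrn_ge T_gt0 t_ge0; set M := T *+ j in tTj *.
have rM : return_time x r M by apply: return_time_mul => //; apply: ltW.
have tM : 0 <= M - t by rewrite subr_ge0.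
move=> /(return_time_shift tM); rewrite -addrA subrKC => rMT'.
have := return_time_shift T'_ge0 rM; rewrite /return_time addrAC => r'M.
exact: joinable_trans (joinable_trans rM rMT') (joinable_sym r'M).
Qed.

Lemma return_time_joinable x r y s T : joinable (x, r) (y, s) -> 0 <= T ->
  return_time x r T <-> return_time y s T.
Proof.
move=> xy T_ge0; have xyT := joinable_shift T_ge0 xy.
split=> rT.
- exact: joinable_trans (joinable_sym xy) (joinable_trans rT xyT).
- exact: joinable_trans xy (joinable_trans rT (joinable_sym xyT)).
Qed.

Lemma return_time_birkhoff x p : iter p f x = x -> 0 <= S p x ->
  exists r0, forall s, r0 <= s -> return_time x s (S p x).
Proof.
move=> px S_ge0; have [r0 high] := can_descend_high p x.
exists r0 => s r0s; apply/joinable_sym/descends_joinable.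
exists p; first by apply: high; lra.
by rewrite iter_descend px addrK.
Qed.

Section PositiveBirkhoff.
Hypothesis birkhoff_gt0 : forall n x, (0 < n)%N -> iter n f x = x -> 0 < S n x.

Lemma return_time_periodic x s T : 0 < T -> return_time x s T ->
  exists n d, [/\ (0 < d)%N, iter d f (iter n f x) = iter n f x,
    T = S d (iter n f x) & descends (x, s) (iter n f x, s - S n x)].
Proof.
move=> T_gt0 [w [n Hn En] [m _ Em]].
have := En; rewrite -Em !iter_descend => -[exy esT].
have desc : descends (x, s) (iter n f x, s - S n x) by exists n; rewrite ?iter_descend.
case: (ltnP m n) => [lt_mn|le_nm].
  have en : n = (m + (n - m))%N by rewrite subnKC // ltnW.
  have : 0 < S (n - m) (iter m f x).
    apply: birkhoff_gt0; first by rewrite subn_gt0.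
    by rewrite -iterD addnC -en exy.
  by rewrite en birkhoffD in esT; lra.
have em : m = (n + (m - n))%N by rewrite subnKC.
exists n, (m - n)%N; split => //.
- rewrite subn_gt0 ltn_neqAle le_nm andbT; apply/eqP => enm.
  by rewrite enm in esT; lra.
- by rewrite -iterD addnC -em exy.
- by rewrite em birkhoffD in esT; lra.
Qed.

End PositiveBirkhoff.

End Descent.

Lemma birkhoff_intr (V : pzRingType) (X : Type) (f : X -> X) (c : X -> int) n x :
  birkhoff f (fun y => (c y)%:~R : V) n x = (birkhoff f c n x)%:~R.
Proof. by rewrite /birkhoff rmorph_sum. Qed.

Section ShiftPeriodicPoints.
Variables (N : nat) (A : 'M[int]_N).
Local Notation σ := (@sigmaA N A).

Lemma least_period_exists z d : (0 < d)%N -> iter d σ z = z -> exists p, least_period z p.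
Proof.
move=> d_gt0 dz; pose P q := `[< (0 < q)%N /\ iter q σ z = z >].
have exP : exists q, P q by exists d; apply/asboolP.
case: (ex_minnP exP) => p /asboolP [p_gt0 pz] minp.
exists p; split=> // q q_gt0 lt_qp qz.
by have := minp q (asboolT (conj q_gt0 qz)); rewrite leqNgt lt_qp.
Qed.

Lemma least_period_dvd z p n d : least_period z p ->
  iter d σ (iter n σ z) = iter n σ z -> (p %| d)%N.
Proof.
move=> [p_gt0 pz minp] dy; set y := iter n σ z in dy.
have py : iter p σ y = y by apply: iter_periodic.
rewrite /dvdn; apply/eqP; case: (posnP (d %% p)) => // dp_gt0; exfalso.
apply: (minp _ dp_gt0 (ltn_pmod d p_gt0)).
by rewrite -{1 2}(iter_periodicK n p_gt0 pz) iterC -/y -(iter_periodic_mod _ py) dy.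
Qed.

Lemma orbit_set_iter_eq z p w q a e : least_period z p -> (0 < q)%N ->
  iter q σ w = w -> iter a σ w = iter e σ z -> orbit_set z p w.
Proof.
move=> [p_gt0 pz _] q_gt0 qw E; exists ((q * a - a + e) %% p)%N; first exact: ltn_pmod.
by rewrite -(iter_periodic_mod _ pz) iterD -E iter_periodicK.
Qed.

Lemma order_unit_birkhoff_gt0 (c : XA A -> int) n z : order_unit c ->
  (0 < n)%N -> iter n σ z = z -> 0 < birkhoff σ c n z.
Proof.
move=> c_unit n_gt0 nz.
have one_cont : contZ (fun _ : XA A => 1 : int) by move=> x; exists 0%N.
have [m [g [_ [g_ge0 [u [_ gu]]]]]] := c_unit _ one_cont.
have := birkhoff_coboundary gu nz; rewrite /birkhoff !sumrB sumrMnl sumr_const card_ord.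
set Sc := \sum_(j < n) c _; set Sg := \sum_(j < n) g _ => E.
have Sg_ge0 : 0 <= Sg by apply: sumr_ge0 => j _.
have Scm_gt0 : 0 < Sc *+ m.
  have -> : Sc *+ m = 1 *+ n + Sg by apply/eqP; rewrite -subr_eq0 opprD addrA E.
  by apply: ltr_wpDr; rewrite ?ltr0n.
have m_gt0 : (0 < m)%N by case: (posnP m) Scm_gt0 => // ->; rewrite mulr0n ltxx.
by rewrite pmulrn_lgt0 in Scm_gt0.
Qed.

End ShiftPeriodicPoints.

Section Suspension.
Variables (R : realType) (N : nat) (A : 'M[int]_N) (l k b : XA A -> R).
Local Notation σ := (@sigmaA N A).
Local Notation c := (fun x => l x - k x).
Local Notation S := (birkhoff σ c).
Local Notation descends := (descends σ c l).
Local Notation joinable := (joinable σ c l).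
Local Notation return_time := (return_time σ c l).
Local Notation sclass := (sclass l k b).
Local Notation sorbit := (sorbit l k b).

#[local] Arguments rst_trans {A R x y z}.
#[local] Arguments rst_sym {A R x y}.

Hypothesis b_le_l : forall x, b x <= l x.

Lemma descends_sequiv p q : descends p q -> sequiv l k b p q.
Proof.
move=> [n]; elim: n p => [|n IHn] p; first by move=> _ <-; apply: rst_refl.
move=> /can_descendS [lp pn]; rewrite iterSr => pq.
apply: rst_trans (IHn _ pn pq); apply: rst_step; split=> //.
exact: le_trans (b_le_l _) lp.
Qed.

Lemma sequiv_joinable p q : sequiv l k b p q <-> joinable p q.
Proof.
split=> [|[w pw qw]]; last first.
  exact: rst_trans (descends_sequiv pw) (rst_sym (descends_sequiv qw)).
elim=> {p q} [p q [_ lp ->]|p|p q _ pq|p q s _ pq _ qs].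
- by apply: descends_joinable; exists 1%N => // j; rewrite ltnS leqn0 => /eqP ->.
- exact: joinable_refl.
- exact: joinable_sym.
- exact: joinable_trans pq qs.
Qed.

Lemma sclass_eq p q : sclass p = sclass q <-> joinable p q.
Proof.
rewrite -sequiv_joinable; split=> [E|pq].
  have : sclass q q by apply: rst_refl.
  by rewrite -E.
apply/funext=> w; apply/propext; split=> [pw|qw].
- exact: rst_trans (rst_sym pq) pw.
- exact: rst_trans pq qw.
Qed.

Hypothesis birkhoff_gt0 : forall n x, (0 < n)%N -> iter n σ x = x -> 0 < S n x.

Lemma return_time_least_period x p s T : least_period x p -> 0 < T ->
  return_time x s T -> exists2 q, (0 < q)%N & T = S p x *+ q.
Proof.
move=> xp T_gt0 /(return_time_periodic birkhoff_gt0 T_gt0) [n [d [d_gt0 dy -> _]]].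
have /dvdnP [q eq_d] := least_period_dvd xp dy; have [_ px _] := xp.
exists q; first by move: d_gt0; rewrite eq_d muln_gt0 => /andP [].
by rewrite eq_d birkhoff_periodic_mul ?iter_periodic // birkhoff_periodic.
Qed.

Lemma least_return_time x p s : least_period x p ->
  (exists2 T, 0 < T & return_time x s T) ->
  [/\ 0 < S p x, return_time x s (S p x) &
      forall T, 0 < T -> return_time x s T -> S p x <= T].
Proof.
move=> xp [T T_gt0 sT]; have [p_gt0 px _] := xp.
have S_gt0 := birkhoff_gt0 p_gt0 px; split=> //.
- have [r0 high] := return_time_birkhoff l px (ltW S_gt0).
  have u_ge0 : 0 <= Num.max s r0 - s by rewrite subr_ge0 le_max lexx.
  apply/(return_time_tail T_gt0 sT u_ge0 (ltW S_gt0)); apply: high.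
  by rewrite subrKC le_max lexx orbT.
- move=> T' T'_gt0 /(return_time_least_period xp T'_gt0) [[//|q] _ ->].
  by rewrite mulrS lerDl mulrn_wge0 // ltW.
Qed.

Definition porbit_of (tau : set (set (XA A * R))) : set (XA A) :=
  [set w | (exists p, least_period w p) /\ exists s, tau (sclass (w, s))].

Lemma sorbit_sub x r T y s t t' : 0 < T -> return_time x r T -> 0 <= t -> 0 <= t' ->
  joinable (x, r + t) (y, s + t') -> sorbit x r `<=` sorbit y s.
Proof.
move=> T_gt0 rT t_ge0 t'_ge0 xy _ [u u_ge0 ->].
have [j tTj] := exists_mulrn_ge T_gt0 t_ge0.
have w_ge0 : 0 <= u + T *+ j - t by have := mulrn_wge0 j (ltW T_gt0); lra.
exists (t' + (u + T *+ j - t)); first exact: addr_ge0.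
apply/sclass_eq.
apply: joinable_trans (return_time_shift u_ge0 (return_time_mul j (ltW T_gt0) rT)) _.
have -> : r + u + T *+ j = r + t + (u + T *+ j - t) by lra.
rewrite [s + _]addrA; exact: joinable_shift w_ge0 xy.
Qed.

Lemma return_time_of_joinable x r T y s t : 0 < T -> return_time x r T -> 0 <= t ->
  joinable (x, r + t) (y, s) -> return_time y s T.
Proof.
move=> T_gt0 rT t_ge0 xy; apply/(return_time_joinable xy (ltW T_gt0)).
exact/(return_time_tail T_gt0 rT t_ge0 (ltW T_gt0)).
Qed.

Lemma sorbit_eq x r T y s t : 0 < T -> return_time x r T -> 0 <= t ->
  joinable (x, r + t) (y, s) -> sorbit x r = sorbit y s.
Proof.
move=> T_gt0 rT t_ge0 xy; apply/seteqP; split.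
  by apply: sorbit_sub T_gt0 rT t_ge0 (lexx 0) _; rewrite addr0.
have sT := return_time_of_joinable T_gt0 rT t_ge0 xy.
by apply: sorbit_sub T_gt0 sT (lexx 0) t_ge0 _; rewrite addr0; apply: joinable_sym.
Qed.

Lemma sorbit_level w s s' T T' : 0 < T -> return_time w s T -> 0 < T' ->
  return_time w s' T' -> sorbit w s = sorbit w s'.
Proof.
suff sorbit_up s1 s2 T1 : 0 < T1 -> return_time w s1 T1 -> s1 <= s2 ->
    sorbit w s1 = sorbit w s2.
  move=> T_gt0 sT T'_gt0 s'T'; case: (lerP s s') => [|/ltW] le_ss'.
  - exact: sorbit_up T_gt0 sT le_ss'.
  - exact/esym/(sorbit_up _ _ _ T'_gt0 s'T').
move=> T1_gt0 s1T le_s12; have d_ge0 : 0 <= s2 - s1 by rewrite subr_ge0.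
by apply: sorbit_eq T1_gt0 s1T d_ge0 _; rewrite subrKC; apply: joinable_refl.
Qed.

Lemma sorbit_porbit_of x r T w : 0 < T -> return_time x r T ->
  porbit_of (sorbit x r) w -> exists s, sorbit x r = sorbit w s /\ return_time w s T.
Proof.
move=> T_gt0 rT [_ [s [t t_ge0 /sclass_eq/joinable_sym xw]]]; exists s; split.
- exact: sorbit_eq T_gt0 rT t_ge0 xw.
- exact: return_time_of_joinable T_gt0 rT t_ge0 xw.
Qed.

Lemma porbit_of_sorbit x r T z p s0 : 0 < T -> return_time x r T ->
  least_period z p -> joinable (z, s0) (x, r) -> porbit_of (sorbit x r) = orbit_set z p.
Proof.
move=> T_gt0 rT zp zx; have [p_gt0 pz _] := zp; apply/seteqP; split.
  move=> w [[q [q_gt0 qw _]] [s [t _ /sclass_eq wx]]].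
  have [a [a' E1]] := joinable_iter wx; have [e [e' E2]] := joinable_iter zx.
  have [m [n E]] := iter_eq_trans E1 E2.
  exact: orbit_set_iter_eq zp q_gt0 qw E.
move=> _ [i _ ->]; split; first exact: least_period_exists p_gt0 (iter_periodic i pz).
have [r0 high] := can_descend_high σ c l i z.
have u_ge0 : 0 <= Num.max s0 r0 - s0 by rewrite subr_ge0 le_max lexx.
have zi : descends (z, s0 + (Num.max s0 r0 - s0)) (iter i σ z, Num.max s0 r0 - S i z).
  exists i; first by apply: high; rewrite subrKC le_max lexx orbT.
  by rewrite iter_descend subrKC.
exists (Num.max s0 r0 - S i z), (Num.max s0 r0 - s0) => //; apply/sclass_eq.
exact: joinable_trans (joinable_sym (descends_joinable zi)) (joinable_shift u_ge0 zx).
Qed.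

Lemma periodic_point_of_return x r T : 0 < T -> return_time x r T ->
  exists z p s0, least_period z p /\ joinable (z, s0) (x, r).
Proof.
move=> T_gt0 rT; have [n [d [d_gt0 dy _ desc]]] := return_time_periodic birkhoff_gt0 T_gt0 rT.
have [p zp] := least_period_exists d_gt0 dy.
by exists (iter n σ x), p, (r - S n x); split=> //; apply/joinable_sym/descends_joinable.
Qed.

Lemma is_sporb_sorbit tau : is_sporb l k b tau ->
  exists x r T, [/\ 0 < T, return_time x r T & tau = sorbit x r].
Proof. by move=> [x [r [T [_ T_gt0 /sclass_eq/joinable_sym rT ->]]]]; exists x, r, T. Qed.

Lemma porbit_of_sporb tau : is_sporb l k b tau ->
  exists z p, least_period z p /\ porbit_of tau = orbit_set z p.
Proof.
move=> /is_sporb_sorbit [x [r [T [T_gt0 rT ->]]]].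
have [z [p [s0 [zp zx]]]] := periodic_point_of_return T_gt0 rT.
by exists z, p; split=> //; apply: porbit_of_sorbit T_gt0 rT zp zx.
Qed.

Lemma porbit_of_inj tau1 tau2 : is_sporb l k b tau1 -> is_sporb l k b tau2 ->
  porbit_of tau1 = porbit_of tau2 -> tau1 = tau2.
Proof.
move=> s1 s2 E; have [z [p [zp Ez]]] := porbit_of_sporb s1.
have z1 : porbit_of tau1 z by rewrite Ez; exists 0%N; case: zp.
have z2 : porbit_of tau2 z by rewrite -E.
move: s1 s2 z1 z2 => /is_sporb_sorbit [x1 [r1 [T1 [T1_gt0 rT1 ->]]]].
move=> /is_sporb_sorbit [x2 [r2 [T2 [T2_gt0 rT2 ->]]]] z1 z2.
have [s1 [-> zs1]] := sorbit_porbit_of T1_gt0 rT1 z1.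
have [s2 [-> zs2]] := sorbit_porbit_of T2_gt0 rT2 z2.
exact: sorbit_level T1_gt0 zs1 T2_gt0 zs2.
Qed.

Lemma porbit_of_surj g : is_porb g -> exists2 tau, is_sporb l k b tau & porbit_of tau = g.
Proof.
move=> [z [p [zp ->]]]; have [p_gt0 pz _] := zp.
have S_gt0 := birkhoff_gt0 p_gt0 pz.
have [r0 high] := return_time_birkhoff l pz (ltW S_gt0).
set s := Num.max (b z) r0.
have zs : return_time z s (S p z) by apply: high; rewrite le_max lexx orbT.
exists (sorbit z s); last exact: porbit_of_sorbit S_gt0 zs zp (joinable_refl _ _ _ _).
exists z, s, (S p z); split=> //; first by rewrite /sdom le_max lexx.
exact/sclass_eq/joinable_sym.
Qed.

Lemma porbit_of_length tau : is_sporb l k b tau ->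
  forall x p, porbit_of tau x -> least_period x p ->
  forall y r, tau (sclass (y, r)) -> is_min_speriod l k b y r (beta c x p).
Proof.
move=> /is_sporb_sorbit [x1 [r1 [T [T_gt0 rT ->]]]] x p xF xp y r.
have [s [-> xs]] := sorbit_porbit_of T_gt0 rT xF.
move=> [t t_ge0 /sclass_eq yx].
have same T' : 0 <= T' -> return_time y r T' <-> return_time x s T'.
  move=> T'_ge0; apply: iff_trans (return_time_joinable yx T'_ge0) _.
  exact: return_time_tail T_gt0 xs t_ge0 T'_ge0.
have [S_gt0 xS S_min] := least_return_time xp (ex_intro2 _ _ T T_gt0 xs).
split=> //; first exact/sclass_eq/joinable_sym/(same _ (ltW S_gt0)).
move=> T' T'_gt0 /sclass_eq/joinable_sym yT'.
exact/S_min/(same _ (ltW T'_gt0)).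
Qed.

End Suspension.

Theorem lemma4p1 (R : realType) (N : nat) (A : 'M[int]_N)
    (HN : (1 < N)%N) (H01 : zero_one_mx A) (Hirr : irreducible_mx A)
    (Hnp : ~~ is_perm_mx A)
    (l k b : XA A -> R) (Htrip : suspension_triplet l k b) :
  exists F : set (set (XA A * R)) -> set (XA A),
    [/\ (forall tau, is_sporb l k b tau -> is_porb (F tau)),
        (forall tau1 tau2, is_sporb l k b tau1 -> is_sporb l k b tau2 ->
            F tau1 = F tau2 -> tau1 = tau2),
        (forall g, is_porb g -> exists2 tau, is_sporb l k b tau & F tau = g)
      & (forall tau, is_sporb l k b tau ->
           forall (x : XA A) (p : nat), F tau x -> least_period x p ->
           forall (y : XA A) (r : R), sdom b (y, r) -> tau (sclass l k b (y, r)) ->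
             is_min_speriod l k b y r (beta (fun z => l z - k z) x p))].
Proof.
case: Htrip => _ _ [cz [_ [cz_unit ecz]]] l_sub_b _.
have b_le_l x : b x <= l x by have [m] := l_sub_b x; have := ler0n R m; lra.
have birkhoff_gt0 n x : (0 < n)%N -> iter n (@sigmaA N A) x = x ->
    0 < birkhoff (@sigmaA N A) (fun z => l z - k z) n x.
  move=> n_gt0 nx; have := order_unit_birkhoff_gt0 cz_unit n_gt0 nx.
  by rewrite -(ltr0z R) -birkhoff_intr /birkhoff; under eq_bigr do rewrite -ecz.
exists (porbit_of l k b); split.
- by move=> tau /(porbit_of_sporb b_le_l birkhoff_gt0) [z [p [zp ->]]]; exists z, p.
- exact: porbit_of_inj b_le_l birkhoff_gt0.
- exact: porbit_of_surj b_le_l birkhoff_gt0.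
- move=> tau stau x p xF xp y r _.
  exact: (porbit_of_length b_le_l birkhoff_gt0 stau xF xp).
Qed.
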